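(* The monoid $\mathcal{BR}(\mathcal{B}r_n)$ is generated by $d_1,\ldots,d_{n-1}$, $e_1,\ldots,e_{n-1}$ and $z_1,\ldots,z_{n-1}$.
   Context: $\mathfrak{C}_n$ is the partition monoid: set partitions of $[2n]$ (top points $1..n$, bottom $n+1..2n$) with concatenation product $*$ (identify bottom point $n+i$ of the first with top point $i$ of the second, join blocks transitively, delete middle points). $I\preceq J$ means each block of $J$ is a union of blocks of $I$. The Brauer monoid $\mathcal{B}r_n$ is the submonoid of set partitions all of whose blocks have exactly two elements; it contains $\mathfrak{S}_n$ (blocks $\{i,n+j\}$), with simple transpositions $s_i$, identity $1=\{\{i,n+i\}\}$, and $t_i$ = the partition with blocks $\{i,i+1\}$, $\{n+i,n+i+1\}$ and $\{j,n+j\}$ for $j\ne i,i+1$. A set partition $J$ of $[2n]$ is boxed if $1\preceq J$ and $J$ restricted to $[n]$ has interval blocks. $\mathcal{BR}(\mathcal{B}r_n)$ is the monoid of pairs $(I,J)$ with $I\in\mathcal{B}r_n$, $J$ boxed, $I\preceq J$, with product $(I,J)(H,K)=(I*H,J*K)$. $b_i$ merges the blocks $\{i,n+i\}$ and $\{i+1,n+i+1\}$ of $1$; $e_i=(1,b_i)$, $z_i=(s_i,b_i)$, $d_i=(t_i,b_i)$. *)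

From mathcomp Require Import all_boot.
Set Implicit Arguments. Unset Strict Implicit. Unset Printing Implicit Defensive.

(* A set partition of [2n] is a P : {set {set 'I_(n+n)}} with
   partition P setT.  Top point i (paper: i+1) is lshift n i,
   bottom point i (paper: n+i+1) is rshift n i; indices are 0-based. *)
Definition spart (n : nat) := {set {set 'I_(n + n)}}.

Definition top n (i : 'I_n) : 'I_(n + n) := lshift n i.
Definition bot n (i : 'I_n) : 'I_(n + n) := rshift n i.

(* successor of i in 'I_n (used only when i.+1 < n) *)
Definition succI n (i : 'I_n) : 'I_n := insubd i i.+1.

Definition is_spart n (P : spart n) := partition P [set: 'I_(n + n)].

Definition sameb n (P : spart n) (x y : 'I_(n + n)) : bool :=
  [exists B in P, (x \in B) && (y \in B)].

(* Concatenation: three layers (0 = top, 1 = middle, 2 = bottom). *)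
Definition layer0 : 'I_3 := inord 0.
Definition layer1 : 'I_3 := inord 1.
Definition layer2 : 'I_3 := inord 2.

Definition emb n (l1 l2 : 'I_3) (p : 'I_(n + n)) : 'I_3 * 'I_n :=
  match split p with inl i => (l1, i) | inr i => (l2, i) end.

Definition glue_edge n (I J : spart n) : rel ('I_3 * 'I_n) :=
  fun u v =>
    [exists x, exists y, [&& emb layer0 layer1 x == u, emb layer0 layer1 y == v & sameb I x y]]
 || [exists x, exists y, [&& emb layer1 layer2 x == u, emb layer1 layer2 y == v & sameb J x y]].

(* I * J : outer points are joined iff connected in the glued graph;
   blocks consisting only of middle points are discarded. *)
Definition pmul n (I J : spart n) : spart n :=
  equivalence_partition
    (fun x y => connect (glue_edge I J) (emb layer0 layer2 x) (emb layer0 layer2 y))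
    [set: 'I_(n + n)].

Definition pleq n (I J : spart n) : Prop :=
  forall B, B \in J -> exists S : {set {set 'I_(n + n)}}, S \subset I /\ B = cover S.

Definition brauer n (P : spart n) : Prop :=
  is_spart P /\ forall B, B \in P -> #|B| = 2.

Definition idp n : spart n := [set [set top i; bot i] | i : 'I_n].

Definition boxed n (J : spart n) : Prop :=
  is_spart J /\ pleq (idp n) J /\
  forall B, B \in J -> forall x y z : 'I_n,
    x <= y -> y <= z -> top x \in B -> top z \in B -> top y \in B.

Definition inBR n (I J : spart n) : Prop := brauer I /\ boxed J /\ pleq I J.

Definition brmul n (a b : spart n * spart n) : spart n * spart n :=
  (pmul a.1 b.1, pmul a.2 b.2).

(* s_i, t_i, b_i (for i with i.+1 < n; paper index i+1) *)
Definition s_gen n (i : 'I_n) : spart n :=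
  [set [set top i; bot (succI i)]; [set top (succI i); bot i]] :|:
  [set [set top j; bot j] | j in [set j : 'I_n | (j != i) && (j != succI i)]].

Definition t_gen n (i : 'I_n) : spart n :=
  [set [set top i; top (succI i)]; [set bot i; bot (succI i)]] :|:
  [set [set top j; bot j] | j in [set j : 'I_n | (j != i) && (j != succI i)]].

Definition b_gen n (i : 'I_n) : spart n :=
  [set [set top i; bot i; top (succI i); bot (succI i)]] :|:
  [set [set top j; bot j] | j in [set j : 'I_n | (j != i) && (j != succI i)]].

Inductive gkind := Gd | Ge | Gz.

Definition gen n (g : gkind * 'I_n) : spart n * spart n :=
  match g.1 with
  | Gd => (t_gen g.2, b_gen g.2)
  | Ge => (idp n, b_gen g.2)
  | Gz => (s_gen g.2, b_gen g.2)
  end.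

Definition evalw n (w : seq (gkind * 'I_n)) : spart n * spart n :=
  foldr (fun g acc => brmul (gen g) acc) (idp n, idp n) w.

From mathcomp Require Import all_boot perm zify.
Set Implicit Arguments. Unset Strict Implicit. Unset Printing Implicit Defensive.

(* A Brauer diagram is encoded by the fixed-point-free involution p pairing each point
   with the other point of its block.  Left multiplication by z_i conjugates p by the
   transposition of top i and top (i+1); left multiplication by d_i creates the cap
   {top i, top (i+1)} and joins the former partners of these two points; e_i leaves the
   first component unchanged.  The second component of a word is obtained from 1 by
   merging columns i and i+1 for every letter of index i.  Hence, if every index i used
   has top i and top (i+1) in one block of J, prepending e_i for all such i turns the
   second component into the boxed partition J.
   The first component is reached by induction on the number of caps.  A cap
   {top a, top b} is moved by z's to the adjacent cap {top (b-1), top b}, which d_(b-1)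
   creates from a diagram with fewer caps: exchange top b with a point bot c of the
   J-block of top (b-1) lying on a cup; such a point exists by counting.  A cap-free
   diagram is a permutation, sorted by adjacent transpositions, and each of them stays
   inside a block of J because the blocks of J meet the top row in intervals. *)

Section Points.
Variable n : nat.
Implicit Types (x y z : 'I_(n + n)) (i j k : 'I_n).

Definition col x : 'I_n := match split x with inl i => i | inr i => i end.
Definition is_top x : bool := if split x is inl _ then true else false.

Lemma col_top i : col (top i) = i.
Proof. by rewrite /col /top -/(unsplit (inl _)) unsplitK. Qed.
Lemma col_bot i : col (bot i) = i.
Proof. by rewrite /col /bot -/(unsplit (inr _)) unsplitK. Qed.
Lemma is_top_top i : is_top (top i).
Proof. by rewrite /is_top /top -/(unsplit (inl _)) unsplitK. Qed.
Lemma is_top_bot i : is_top (bot i) = false.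
Proof. by rewrite /is_top /bot -/(unsplit (inr _)) unsplitK. Qed.

Variant point_spec x : bool -> 'I_n -> Type :=
  | PointTop i of x = top i : point_spec x true i
  | PointBot i of x = bot i : point_spec x false i.

Lemma pointP x : point_spec x (is_top x) (col x).
Proof.
rewrite /is_top /col -{1}(splitK x); case: (split x) => i /=.
  exact: PointTop.
exact: PointBot.
Qed.

Lemma top_inj : injective (@top n).
Proof. by move=> i j /(congr1 col); rewrite !col_top. Qed.
Lemma bot_inj : injective (@bot n).
Proof. by move=> i j /(congr1 col); rewrite !col_bot. Qed.
Lemma eq_top i j : (top i == top j) = (i == j).
Proof. exact/inj_eq/top_inj. Qed.
Lemma eq_bot i j : (bot i == bot j) = (i == j).
Proof. exact/inj_eq/bot_inj. Qed.
Lemma eq_top_bot i j : (top i == bot j) = false.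
Proof. by apply/negbTE/eqP => /(congr1 is_top); rewrite is_top_top is_top_bot. Qed.
Lemma eq_bot_top i j : (bot i == top j) = false.
Proof. by rewrite eq_sym eq_top_bot. Qed.

End Points.

Section SetPartitions.
Variable n : nat.
Implicit Types (x y z : 'I_(n + n)) (P Q : spart n).

Lemma sameb_sym P : symmetric (sameb P).
Proof.
by move=> x y; apply/existsP/existsP => -[B /and3P[BP xB yB]]; exists B; rewrite BP xB yB.
Qed.

Lemma sameb_mem P B x y : B \in P -> x \in B -> y \in B -> sameb P x y.
Proof. by move=> BP xB yB; apply/existsP; exists B; rewrite BP xB yB. Qed.

Lemma samebP P x y : sameb P x y -> exists2 B, B \in P & (x \in B) && (y \in B).
Proof. by case/existsP => B /andP[BP xyB]; exists B. Qed.

Lemma sameb_pblock P x y : is_spart P -> sameb P x y = (pblock P x == pblock P y).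
Proof.
case/and3P => /eqP covP trivP _.
have xP : x \in cover P by rewrite covP inE.
rewrite eq_pblock //; apply/idP/idP => [/samebP[B BP /andP[xB yB]]|yx].
  by rewrite (def_pblock trivP BP xB).
by apply: (sameb_mem (pblock_mem xP)); rewrite ?mem_pblock.
Qed.

Lemma sameb_refl P x : is_spart P -> sameb P x x.
Proof. by move=> hP; rewrite sameb_pblock. Qed.

Lemma sameb_trans P x y z : is_spart P -> sameb P x y -> sameb P y z -> sameb P x z.
Proof. by move=> hP; rewrite !sameb_pblock // => /eqP->. Qed.

Lemma eq_spart P Q : is_spart P -> is_spart Q -> sameb P =2 sameb Q -> P = Q.
Proof.
move=> hP hQ ePQ.
rewrite -(equivalence_partition_pblock hP) -(equivalence_partition_pblock hQ).
apply: eq_imset => x; apply/setP => y; have [_ tP _] := and3P hP; have [_ tQ _] := and3P hQ.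
rewrite !inE -!eq_pblock ?(cover_partition hP) ?(cover_partition hQ) ?inE //.
by rewrite -!sameb_pblock // ePQ.
Qed.

Lemma sameb_equivalence_partition (R : rel 'I_(n + n)) x y :
  (forall a b c, R c c * (R a b -> R a c = R b c)) ->
  sameb (equivalence_partition R setT) x y = R x y.
Proof.
move=> eqR; have eqR' : {in setT & &, equivalence_rel R} by move=> a b c _ _ _; exact: eqR.
have hP := equivalence_partitionP eqR'.
have [_ tP _] := and3P hP.
rewrite sameb_pblock // eq_pblock ?(cover_partition hP) ?inE //.
by rewrite pblock_equivalence_partition ?inE.
Qed.

Lemma pleq_sameb P Q x y : is_spart P -> is_spart Q -> pleq P Q -> sameb P x y -> sameb Q x y.
Proof.
move=> hP hQ PQ /samebP[B BP /andP[xB yB]]; have [_ tP _] := and3P hP.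
have xQ : x \in cover Q by rewrite (cover_partition hQ) inE.
have [S [SP QE]] := PQ _ (pblock_mem xQ).
have : x \in pblock Q x by rewrite mem_pblock.
rewrite QE => /bigcupP[C CS xC].
have CB : C = B by rewrite -(def_pblock tP (subsetP SP _ CS) xC) (def_pblock tP BP xB).
apply: (sameb_mem (pblock_mem xQ)); first by rewrite mem_pblock.
by rewrite QE; apply/bigcupP; exists C; rewrite // CB.
Qed.

End SetPartitions.

Lemma connect_fiberE (T : finType) (K : eqType) (e : rel T) (g : T -> K) :
  (forall u v, e u v -> g u = g v) -> (forall u v, g u = g v -> connect e u v) ->
  forall u v, connect e u v = (g u == g v).
Proof.
move=> ge eg u v; apply/idP/idP => [/connectP[s pth ->]|/eqP/eg //].
by elim: s u pth => [|w s IH] u //= /andP[/ge -> /IH].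
Qed.

Section Concatenation.
Variable n : nat.
Implicit Types (x y z : 'I_(n + n)) (i j k : 'I_n) (P Q G X : spart n).

Local Notation V := ('I_3 * 'I_n)%type.
Local Notation e01 := (emb layer0 layer1).
Local Notation e12 := (emb layer1 layer2).
Local Notation e02 := (emb layer0 layer2).

Lemma layer_neq :
  ((layer1 == layer0) = false) * ((layer2 == layer0) = false) * ((layer2 == layer1) = false).
Proof. by do !split; apply/eqP => /(congr1 val); rewrite /= !inordK. Qed.

Lemma emb_top l1 l2 j : emb l1 l2 (top j) = (l1, j).
Proof. by rewrite /emb /top -/(unsplit (inl _)) unsplitK. Qed.
Lemma emb_bot l1 l2 j : emb l1 l2 (bot j) = (l2, j).
Proof. by rewrite /emb /bot -/(unsplit (inr _)) unsplitK. Qed.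

Lemma glue_edge_sym P Q : symmetric (glue_edge P Q).
Proof.
move=> u v; rewrite /glue_edge; congr orb;
  apply/existsP/existsP => -[x /existsP[y /and3P[xu yv xy]]];
  by exists y; apply/existsP; exists x; rewrite xu yv sameb_sym.
Qed.

Lemma glue_edge01 P Q x y : sameb P x y -> glue_edge P Q (e01 x) (e01 y).
Proof.
by move=> xy; apply/orP; left; apply/existsP; exists x; apply/existsP; exists y; rewrite !eqxx.
Qed.

Lemma glue_edge12 P Q x y : sameb Q x y -> glue_edge P Q (e12 x) (e12 y).
Proof.
by move=> xy; apply/orP; right; apply/existsP; exists x; apply/existsP; exists y; rewrite !eqxx.
Qed.

Lemma glue_edgeP P Q u v : glue_edge P Q u v ->
  (exists x y, [/\ u = e01 x, v = e01 y & sameb P x y]) \/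
  (exists x y, [/\ u = e12 x, v = e12 y & sameb Q x y]).
Proof.
by case/orP => /existsP[x /existsP[y /and3P[/eqP<- /eqP<- xy]]]; [left | right]; exists x, y.
Qed.

Lemma connect_glue_equiv P Q (a b c : 'I_(n + n)) :
  let R x y := connect (glue_edge P Q) (e02 x) (e02 y) in R c c * (R a b -> R a c = R b c).
Proof.
split=> [|ab]; first exact: connect0.
apply/idP/idP; last exact: connect_trans.
by apply: connect_trans; rewrite (sym_connect_sym (@glue_edge_sym P Q)).
Qed.

Lemma pmul_spart P Q : is_spart (pmul P Q).
Proof. by apply: equivalence_partitionP => a b c _ _ _; apply: connect_glue_equiv. Qed.

Lemma pmul_sameb P Q x y :
  sameb (pmul P Q) x y = connect (glue_edge P Q) (e02 x) (e02 y).
Proof. by rewrite sameb_equivalence_partition // => a b c; apply: connect_glue_equiv. Qed.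

Lemma pmul_sameb_fiber (K : eqType) G X (g : V -> K) :
  (forall x y, sameb G x y -> g (e01 x) = g (e01 y)) ->
  (forall x y, sameb X x y -> g (e12 x) = g (e12 y)) ->
  (forall u v, g u = g v -> connect (glue_edge G X) u v) ->
  forall x y, sameb (pmul G X) x y = (g (e02 x) == g (e02 y)).
Proof.
move=> gG gX eg x y; rewrite pmul_sameb (connect_fiberE _ eg) //.
by move=> u v /glue_edgeP[[a [b [-> -> /gG]]]|[a [b [-> -> /gX]]]].
Qed.

Definition un12 (w : V) : 'I_(n + n) := if w.1 == layer1 then top w.2 else bot w.2.

Lemma e12K w : w.1 != layer0 -> e12 (un12 w) = w.
Proof.
case: w => l j /=; rewrite /un12 /=.
have [-> _|l1 l0] := eqVneq l layer1; first by rewrite emb_top.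
rewrite emb_bot; congr pair; apply/val_inj; move: l0 l1.
by rewrite -!val_eqE /= !inordK //; case: l => -[|[|[|m]]].
Qed.

Definition relabel_top (tau : 'I_n -> 'I_n) x := if is_top x then top (tau (col x)) else x.

Lemma relabel_top_id x : relabel_top id x = x.
Proof. by rewrite /relabel_top; case: (pointP x) => k ->; rewrite ?col_top. Qed.

(* The top vertex (0, j) goes to top (tau j): that is the middle vertex joined to it when
   the first factor pairs top j with bot (tau j). *)
Definition lower (tau : 'I_n -> 'I_n) (w : V) : 'I_(n + n) :=
  if w.1 == layer0 then top (tau w.2) else un12 w.

Lemma lower_e12 tau z : lower tau (e12 z) = z.
Proof. by case: (pointP z) => k ->; rewrite /lower /un12 ?emb_top ?emb_bot /= ?eqxx ?layer_neq. Qed.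

Lemma lower_e01 tau z : lower tau (e01 z) = top (if is_top z then tau (col z) else col z).
Proof.
by case: (pointP z) => k ->; rewrite /lower /un12 ?emb_top ?emb_bot /= ?eqxx ?layer_neq.
Qed.

Lemma lower_e02 tau z : lower tau (e02 z) = relabel_top tau z.
Proof.
case: (pointP z) => k ->; rewrite /lower /un12 /relabel_top ?emb_top ?emb_bot /=;
  by rewrite ?eqxx ?layer_neq ?is_top_top ?is_top_bot ?col_top.
Qed.

Lemma connect_e12 P Q x y : sameb Q x y -> connect (glue_edge P Q) (e12 x) (e12 y).
Proof. by move=> xy; apply/connect1/glue_edge12. Qed.

Lemma connect_lower P Q tau w : (w.1 == layer0 -> sameb P (top w.2) (bot (tau w.2))) ->
  connect (glue_edge P Q) w (e12 (lower tau w)).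
Proof.
case: w => l j /=; rewrite /lower /=; have [-> /(_ isT) vert|l0 _] := eqVneq l layer0.
  rewrite -[(layer0, j)](emb_top _ layer1) [e12 _]emb_top -(emb_bot layer0 layer1).
  exact/connect1/glue_edge01.
by rewrite e12K.
Qed.

Lemma connect_mid (K : eqType) G X (m : V -> 'I_(n + n)) (f : 'I_(n + n) -> K) :
  (forall w, connect (glue_edge G X) w (e12 (m w))) ->
  (forall x y, f x = f y -> connect (glue_edge G X) (e12 x) (e12 y)) ->
  forall u v, f (m u) = f (m v) -> connect (glue_edge G X) u v.
Proof.
move=> wm fc u v /fc uv; apply: connect_trans (wm u) _; apply: connect_trans uv _.
by rewrite (sym_connect_sym (@glue_edge_sym G X)).
Qed.

End Concatenation.

Section GeneratorProducts.
Variable n : nat.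
Implicit Types (x y z : 'I_(n + n)) (i j k : 'I_n) (G X : spart n).

Lemma succI_val i : i.+1 < n -> succI i = i.+1 :> nat.
Proof. by move=> lt_i; rewrite /succI val_insubd lt_i. Qed.

Lemma succI_neq i : i.+1 < n -> (succI i == i) = false.
Proof. by move=> lt_i; apply/eqP => /(congr1 val) /=; rewrite succI_val //; lia. Qed.

Lemma idpE : idp n = equivalence_partition (fun x y => col x == col y) setT.
Proof.
have col_block j : [set top j; bot j] = [set y in setT | j == col y].
  apply/setP => y; rewrite !inE; case: (pointP y) => k ->.
    by rewrite eq_top eq_top_bot orbF eq_sym.
  by rewrite eq_bot_top eq_bot eq_sym.
apply/setP => B; apply/imsetP/imsetP => [[j _ ->]|[x _ ->]].
  by exists (top j); rewrite // col_top col_block.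
by exists (col x); rewrite // col_block.
Qed.

Lemma idp_spart : is_spart (idp n).
Proof. by rewrite idpE; apply: equivalence_partitionP => x y z _ _ _; split => // /eqP->. Qed.

Lemma idp_sameb x y : sameb (idp n) x y = (col x == col y).
Proof. by rewrite idpE sameb_equivalence_partition // => a b c; split => // /eqP->. Qed.

Lemma pmul_perm X (tau : 'I_n -> 'I_n) : is_spart X ->
  forall x y, sameb (pmul [set [set top j; bot (tau j)] | j : 'I_n] X) x y =
              sameb X (relabel_top tau x) (relabel_top tau y).
Proof.
move=> hX x y; pose g w := pblock X (lower tau w).
rewrite (pmul_sameb_fiber (g := g)).
- by rewrite /g !lower_e02 sameb_pblock.
- move=> a b /samebP[B /imsetP[j _ ->] /andP[]]; rewrite /g !lower_e01.
  by rewrite !inE => /orP[]/eqP-> /orP[]/eqP->; rewrite ?is_top_top ?is_top_bot ?col_top ?col_bot.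
- by move=> a b ab; rewrite /g !lower_e12; apply/eqP; rewrite -sameb_pblock.
apply: (connect_mid (m := lower tau) (f := pblock X)) => [w|a b /eqP].
  apply: connect_lower => _; apply: (sameb_mem (B := [set top w.2; bot (tau w.2)])).
  - by apply/imsetP; exists w.2.
  - by rewrite !inE eqxx.
  - by rewrite !inE eqxx orbT.
by rewrite -sameb_pblock // => /connect_e12.
Qed.

Lemma pmul_idp X x y : is_spart X -> sameb (pmul (idp n) X) x y = sameb X x y.
Proof. by move=> hX; rewrite (pmul_perm id hX) !relabel_top_id. Qed.

Lemma s_gen_perm i : s_gen i = [set [set top j; bot (tperm i (succI i) j)] | j : 'I_n].
Proof.
apply/setP => B; rewrite /s_gen !inE; apply/idP/imsetP.
- case/orP => [/orP[]/eqP->|/imsetP[j]].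
  + by exists i; rewrite ?tpermL.
  + by exists (succI i); rewrite ?tpermR.
  by rewrite inE => /andP[ji ji1] ->; exists j; rewrite // tpermD // eq_sym.
case=> j _ ->; case: tpermP => [->|->|/eqP ji /eqP ji1]; rewrite ?eqxx ?orbT //.
by apply/orP; right; apply: imset_f; rewrite inE ji ji1.
Qed.

Lemma tperm_top i j k : tperm (top i) (top j) (top k) = top (tperm i j k).
Proof.
by case: (tpermP i j k) => [->|->|ki kj]; rewrite ?tpermL ?tpermR // tpermD // eq_top;
  apply/eqP => /esym.
Qed.

Lemma tperm_top_bot i j k : tperm (top i) (top j) (bot k) = bot k.
Proof. by rewrite tpermD // eq_top_bot. Qed.

Lemma is_top_tperm i j z : is_top (tperm (top i) (top j) z) = is_top z.
Proof. by case: tpermP => [->|->|_ _] //; rewrite !is_top_top. Qed.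

Lemma relabel_top_tperm i j x : relabel_top (tperm i j) x = tperm (top i) (top j) x.
Proof.
by rewrite /relabel_top; case: (pointP x) => k ->; rewrite ?col_top ?tperm_top ?tperm_top_bot.
Qed.

Lemma sameb_untouched (F : {set {set 'I_(n + n)}}) i j : j \notin [:: i; succI i] ->
  sameb (F :|: [set [set top k; bot k] | k in [set k : 'I_n | (k != i) && (k != succI i)]])
        (top j) (bot j).
Proof.
rewrite !inE negb_or => /andP[ji ji']; apply: (sameb_mem (B := [set top j; bot j])).
- by apply/setUP; right; apply: imset_f; rewrite inE ji ji'.
- by rewrite !inE eqxx.
- by rewrite !inE eqxx orbT.
Qed.

Lemma pmul_s_gen X i x y : is_spart X ->
  sameb (pmul (s_gen i) X) x y =
  sameb X (tperm (top i) (top (succI i)) x) (tperm (top i) (top (succI i)) y).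
Proof. by move=> hX; rewrite s_gen_perm pmul_perm // !relabel_top_tperm. Qed.

End GeneratorProducts.

Section MergedBlocks.
Variables (n : nat) (X : spart n) (i i' : 'I_n).
Hypothesis hX : is_spart X.
Implicit Types (x y z : 'I_(n + n)) (j k : 'I_n) (G : spart n).

Local Notation e12 := (emb layer1 layer2).

Definition merge_block x :=
  if pblock X x == pblock X (top i') then pblock X (top i) else pblock X x.

Definition merge_rel x y :=
  [|| sameb X x y, sameb X x (top i) && sameb X (top i') y
    | sameb X x (top i') && sameb X (top i) y].

Lemma eq_merge_block x y : (merge_block x == merge_block y) = merge_rel x y.
Proof.
rewrite /merge_block /merge_rel !(sameb_pblock _ _ hX).
case: (pblock X x =P pblock X (top i')) => [->|/eqP/negbTE nx];
case: (pblock X y =P pblock X (top i')) => [->|/eqP/negbTE ny];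
by rewrite ?eqxx ?(eq_sym (pblock X (top i'))) ?nx ?ny ?andbF ?andbT ?orbF ?orbb.
Qed.

Lemma merge_block_tops j : j \in [:: i; i'] -> merge_block (top j) = pblock X (top i).
Proof. by rewrite /merge_block !inE => /orP[]/eqP->; rewrite ?eqxx //; case: ifP. Qed.

Lemma merge_connect G a b : sameb G (bot i) (bot i') ->
  merge_block a = merge_block b -> connect (glue_edge G X) (e12 a) (e12 b).
Proof.
move=> cup /eqP; rewrite eq_merge_block /merge_rel.
have ii' : connect (glue_edge G X) (e12 (top i)) (e12 (top i')).
  by rewrite !emb_top -!(emb_bot layer0); apply/connect1/glue_edge01.
have sym := sym_connect_sym (@glue_edge_sym _ G X).
case/or3P => [/connect_e12 //|/andP[ai i'b]|/andP[ai' ib]].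
  exact: connect_trans (connect_e12 _ ai) (connect_trans ii' (connect_e12 _ i'b)).
rewrite sym in ii'.
exact: connect_trans (connect_e12 _ ai') (connect_trans ii' (connect_e12 _ ib)).
Qed.

(* In t_i * X the points top i, top i' form a block of their own; every other point lies
   in its block of X, merged as in b_i * X. *)
Definition cap_label x : option {set 'I_(n + n)} :=
  if is_top x && (col x \in [:: i; i']) then None else Some (merge_block x).

Definition on_cap x := (x == top i) || (x == top i').

Lemma eq_cap_label x y : (cap_label x == cap_label y) =
  if on_cap x then on_cap y else ~~ on_cap y && merge_rel x y.
Proof.
have capE z : is_top z && (col z \in [:: i; i']) = on_cap z.
  by rewrite /on_cap; case: (pointP z) => k ->; rewrite ?col_top ?eq_top ?eq_bot_top //= !inE.
rewrite /cap_label !capE; case: (on_cap x); case: (on_cap y) => //=.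
by rewrite -eq_merge_block.
Qed.

End MergedBlocks.

Section MergeProducts.
Variable n : nat.
Implicit Types (x y z : 'I_(n + n)) (i j k : 'I_n) (X : spart n).

Local Notation e01 := (emb layer0 layer1).
Local Notation e12 := (emb layer1 layer2).
Local Notation e02 := (emb layer0 layer2).

Lemma pmul_b_gen X i x y : is_spart X ->
  sameb (pmul (b_gen i) X) x y =
  (merge_block X i (succI i) x == merge_block X i (succI i) y).
Proof.
move=> hX; set i' := succI i; set B4 := [set top i; bot i; top i'; bot i'].
have B4G : B4 \in b_gen i by rewrite !inE eqxx.
have colB4 z : z \in B4 -> col z \in [:: i; i'].
  by rewrite /B4 !inE => /orP[/orP[/orP[]|]|] /eqP->; rewrite ?col_top ?col_bot eqxx ?orbT.
have vertG j : sameb (b_gen i) (top j) (bot j).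
  have [|jn] := boolP (j \in [:: i; i']); last exact: sameb_untouched.
  by rewrite !inE => /orP[]/eqP->; apply: (sameb_mem B4G); rewrite !inE eqxx ?orbT.
pose g w := merge_block X i i' (lower id w).
rewrite (pmul_sameb_fiber (g := g)).
- by rewrite /g !lower_e02 !relabel_top_id.
- move=> a b /samebP[B]; rewrite /g !lower_e01 !if_same !inE.
  case/orP => [/eqP->|/imsetP[j _ ->]] /andP[].
    by move=> /colB4/merge_block_tops-> /colB4/merge_block_tops->.
  by rewrite !inE => /orP[]/eqP-> /orP[]/eqP->; rewrite ?col_top ?col_bot.
- by move=> a b ab; rewrite /g !lower_e12; apply/eqP; rewrite eq_merge_block // /merge_rel ab.
apply: (connect_mid (m := lower id)) => [w|a b]; first by apply: connect_lower => _; exact: vertG.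
by apply: merge_connect => //; apply: (sameb_mem B4G); rewrite !inE eqxx ?orbT.
Qed.

Lemma pmul_t_gen X i x y : is_spart X ->
  sameb (pmul (t_gen i) X) x y =
  (cap_label X i (succI i) x == cap_label X i (succI i) y).
Proof.
move=> hX; set i' := succI i; set G := t_gen i.
have capG : sameb G (top i) (top i').
  by apply: (sameb_mem (B := [set top i; top i'])); rewrite !inE ?eqxx ?orbT.
have cupG : sameb G (bot i) (bot i').
  by apply: (sameb_mem (B := [set bot i; bot i'])); rewrite !inE ?eqxx ?orbT.
pose g w := if (w.1 == layer0) && (w.2 \in [:: i; i']) then None
            else Some (merge_block X i i' (lower id w)).
have g12 z : g (e12 z) = Some (merge_block X i i' z).
  by rewrite /g lower_e12; case: (pointP z) => k ->; rewrite ?emb_top ?emb_bot /= ?layer_neq.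
have g01 z : g (e01 z) = if is_top z && (col z \in [:: i; i']) then None
                         else Some (merge_block X i i' (top (col z))).
  rewrite /g lower_e01 if_same; case: (pointP z) => k ->;
  by rewrite ?emb_top ?emb_bot /= ?col_top ?col_bot ?eqxx ?layer_neq.
rewrite (pmul_sameb_fiber (g := g)).
- congr (_ == _); rewrite /g lower_e02 relabel_top_id /cap_label;
    by case: (pointP _) => k ->; rewrite ?emb_top ?emb_bot /= ?col_top ?eqxx ?layer_neq.
- move=> a b /samebP[B]; rewrite !g01 !inE => /orP[/orP[]/eqP->|/imsetP[j]] /=.
  + case/andP; rewrite !inE => /orP[]/eqP-> /orP[]/eqP->;
    by rewrite ?col_top ?is_top_top ?eqxx ?orbT.
  + case/andP; rewrite !inE => /orP[]/eqP-> /orP[]/eqP->; rewrite ?col_bot ?is_top_bot //=;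
      by rewrite !merge_block_tops // !inE eqxx ?orbT.
  rewrite inE => /andP[ji ji'] -> /andP[]; rewrite !inE.
  move=> /orP[]/eqP-> /orP[]/eqP->; rewrite ?col_top ?col_bot ?is_top_top ?is_top_bot //=;
  by rewrite (negbTE ji) (negbTE ji').
- by move=> a b ab; rewrite !g12; congr Some; apply/eqP; rewrite eq_merge_block // /merge_rel ab.
have sym := sym_connect_sym (@glue_edge_sym _ G X).
have none_connect w : g w = None -> connect (glue_edge G X) w (e01 (top i)).
  case: w => l j; rewrite /g /=; case: ifP => // /andP[/eqP-> jii'] _.
  rewrite -(emb_top layer0 layer1); move: jii'; rewrite !inE => /orP[]/eqP->; first exact: connect0.
  by rewrite sym; apply/connect1/glue_edge01.
have some_connect w c : g w = Some c ->
    c = merge_block X i i' (lower id w) /\ connect (glue_edge G X) w (e12 (lower id w)).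
  rewrite /g; case: ifP => // wi [->]; split => //; apply: connect_lower => w0.
  by apply: sameb_untouched; move: wi; rewrite w0 /= => /negbT.
move=> u v; case gu: (g u) => [c|] gv.
  have [cu uc] := some_connect _ _ gu; have [cv vc] := some_connect _ _ (esym gv).
  apply: connect_trans uc _; rewrite sym; apply: connect_trans vc _; rewrite sym.
  by apply: (merge_connect hX cupG); rewrite -cu -cv.
apply: connect_trans (none_connect _ gu) _; rewrite sym; exact: none_connect.
Qed.

End MergeProducts.

Section Pairings.
Variable n : nat.
Implicit Types (x y z : 'I_(n + n)) (i j k : 'I_n) (X : spart n).
Implicit Types (p q r : 'I_(n + n) -> 'I_(n + n)).

Definition pairing X p := forall x y, sameb X x y = (y == x) || (y == p x).

Definition conjf r p := r \o p \o r.

Lemma pairing_s_gen X p i : is_spart X -> pairing X p ->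
  pairing (pmul (s_gen i) X) (conjf (tperm (top i) (top (succI i))) p).
Proof.
move=> hX hp x y; rewrite pmul_s_gen // hp (inj_eq (@perm_inj _ _)); congr (_ || _).
by rewrite /conjf /=; apply/eqP/eqP => [<-|->]; rewrite tpermK.
Qed.

Definition cap_swap q i i' x :=
  if x == top i then top i' else if x == top i' then top i else
  if x == q (top i) then q (top i') else if x == q (top i') then q (top i) else q x.

Lemma pairing_t_gen X q i : i.+1 < n -> is_spart X -> involutive q -> pairing X q ->
  ~~ is_top (q (top i)) -> ~~ is_top (q (top (succI i))) ->
  pairing (pmul (t_gen i) X) (cap_swap q i (succI i)).
Proof.
move=> lt_i hX qK hq Abot Bbot x y.
set i' := succI i; set A := q (top i); set B := q (top i').
have top_q j z : (top j == q z) = (z == q (top j)).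
  by rewrite -(inj_eq (can_inj qK)) qK eq_sym.
have bot_top z j : ~~ is_top z -> (z == top j) = false.
  by case: (pointP z) => // k ->; rewrite eq_bot_top.
have AB : (A == B) = false by rewrite (inj_eq (can_inj qK)) eq_top eq_sym succI_neq.
rewrite pmul_t_gen // eq_cap_label // /merge_rel !hq !top_q /cap_swap -/i' -/A -/B /on_cap.
have [->|xi] := eqVneq x (top i); first by [].
have [->|xi'] := eqVneq x (top i'); first by rewrite /= orbC.
have Atop j : (A == top j) = false := bot_top _ j Abot.
have Btop j : (B == top j) = false := bot_top _ j Bbot.
rewrite /=.
have [->|xA] := eqVneq x A.
  rewrite [q A]qK AB /=.
  have [->|yi] := eqVneq y (top i); first by rewrite ![top i == _]eq_sym Atop Btop.
  have [->|yi'] := eqVneq y (top i'); first by rewrite ![top i' == _]eq_sym Atop Btop orbT.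
  by rewrite /= !orbF.
have [->|xB] := eqVneq x B.
  rewrite [q B]qK /=.
  have [->|yi] := eqVneq y (top i); first by rewrite ![top i == _]eq_sym Atop Btop.
  have [->|yi'] := eqVneq y (top i'); first by rewrite ![top i' == _]eq_sym Atop Btop orbT.
  by rewrite /= !orbF orbC.
have [->|yx] := eqVneq y x; first by rewrite (negbTE xi) (negbTE xi').
have [->|yqx] := eqVneq y (q x); last by rewrite andbF.
by rewrite ![q x == _]eq_sym !top_q (negbTE xA) (negbTE xB).
Qed.

Definition ncaps p := #|[set x | is_top x && is_top (p x)]|.

Lemma ncaps_conjf_top p i j : ncaps (conjf (tperm (top i) (top j)) p) = ncaps p.
Proof.
have rK : involutive (tperm (top i) (top j)) := tpermK _ _.
rewrite /ncaps -(card_imset _ (can_inj rK)) (can_imset_pre _ rK).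
by apply: eq_card => x; rewrite !inE /conjf /= rK !is_top_tperm.
Qed.

Lemma pairing_ext X p p' : pairing X p -> p =1 p' -> pairing X p'.
Proof. by move=> hp pp' x y; rewrite hp pp'. Qed.

Lemma eq_pairing X Y p : is_spart X -> is_spart Y -> pairing X p -> pairing Y p -> X = Y.
Proof. by move=> hX hY hXp hYp; apply: eq_spart => // x y; rewrite hXp hYp. Qed.

Lemma brauer_pairing I : brauer I ->
  exists p, [/\ involutive p, forall x, p x != x & pairing I p].
Proof.
case=> hI two; have [_ tI _] := and3P hI.
pose p x := odflt x [pick y in pblock I x :\ x].
have blockE x : p x != x /\ pblock I x = [set x; p x].
  have xI : x \in cover I by rewrite (cover_partition hI) inE.
  have xB : x \in pblock I x by rewrite mem_pblock.
  have /eqP := two _ (pblock_mem xI); rewrite (cardsD1 x) xB add1n eqSS => /cards1P[y ey].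
  have -> : p x = y by rewrite /p ey; case: pickP => [z|/(_ y)]; rewrite inE ?eqxx // => /eqP.
  split; first by have := set11 y; rewrite -ey in_setD1 => /andP[].
  by rewrite -(setD1K xB) ey.
have hp : pairing I p.
  move=> x y; rewrite sameb_pblock // eq_pblock ?(cover_partition hI) ?inE //.
  by rewrite (proj2 (blockE x)) !inE.
exists p; split=> // [x|x]; last exact: (proj1 (blockE x)).
have := hp (p x) x; rewrite sameb_sym hp eqxx orbT eq_sym (negbTE (proj1 (blockE x))).
by move/esym/eqP.
Qed.

End Pairings.

Lemma evalw_spart n (w : seq (gkind * 'I_n)) : is_spart (evalw w).1 /\ is_spart (evalw w).2.
Proof. by case: w => [|g w] /=; [rewrite !idp_spart | split; apply: pmul_spart]. Qed.

Definition bridged (T : seq nat) (a b : nat) : bool :=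
  all (mem T) (iota (minn a b) (maxn a b - minn a b)).

Lemma bridgedP T a b : reflect (forall k, minn a b <= k < maxn a b -> k \in T) (bridged T a b).
Proof. by apply: (iffP allP) => h k hk; apply: h; move: hk; rewrite mem_iota; lia. Qed.

Lemma bridged_nil a b : bridged [::] a b = (a == b).
Proof.
apply/bridgedP/eqP => [h|-> k]; last by lia.
by case: (ltngtP a b) => // ab; [have := h a | have := h b]; rewrite in_nil => /(_ ltac:(lia)).
Qed.

Lemma bridged_sym T a b : bridged T a b = bridged T b a.
Proof. by rewrite /bridged minnC maxnC. Qed.

Lemma eq_bridged T T' a b : T =i T' -> bridged T a b = bridged T' a b.
Proof. by move=> eT; apply/bridgedP/bridgedP => h k hk; [rewrite -eT | rewrite eT]; apply: h. Qed.

Lemma bridged_cons i T a b : bridged (i :: T) a b =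
  [|| bridged T a b, bridged T a i && bridged T i.+1 b | bridged T a i.+1 && bridged T i b].
Proof.
apply/idP/idP.
  move/bridgedP => h; have h' k : minn a b <= k < maxn a b -> k != i -> k \in T.
    by move=> hk ki; have := h k hk; rewrite inE (negbTE ki).
  have [hi|hi] := boolP (minn a b <= i < maxn a b).
    by case: (leqP a b) => ab; apply/or3P; [apply: Or32 | apply: Or33];
      apply/andP; split; apply/bridgedP => k hk; apply: h'; lia.
  by apply/or3P/Or31/bridgedP => k hk; apply: h' => //; apply: contraNneq hi => <-.
case/or3P => [/bridgedP h|/andP[/bridgedP h1 /bridgedP h2]|/andP[/bridgedP h1 /bridgedP h2]];
  apply/bridgedP => k hk; rewrite inE.
- by rewrite h ?orbT.
- have [//|ki] := eqVneq k i; have [kl|kr] := boolP (minn a i <= k < maxn a i).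
    exact: h1.
  by apply: h2; lia.
- have [//|ki] := eqVneq k i; have [kl|kr] := boolP (minn i b <= k < maxn i b).
    exact: h2.
  by apply: h1; lia.
Qed.

Section Words.
Variable n : nat.
Implicit Types (x y : 'I_(n + n)) (w : seq (gkind * 'I_n)).

Lemma evalw_snd_sameb w : all (fun g : gkind * 'I_n => g.2.+1 < n) w ->
  forall x y, sameb (evalw w).2 x y = bridged [seq nat_of_ord g.2 | g <- w] (col x) (col y).
Proof.
elim: w => [|g w IH] /=; first by move=> _ x y; rewrite idp_sameb bridged_nil.
case/andP => lt_g lt_w x y.
have -> : (gen g).2 = b_gen g.2 by case: g lt_g => [[]].
rewrite pmul_b_gen ?(proj2 (evalw_spart w)) // eq_merge_block ?(proj2 (evalw_spart w)) //.
by rewrite /merge_rel !IH // !col_top succI_val // bridged_cons.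
Qed.

Lemma evalw_e_fst (es : seq 'I_n) w :
  (evalw ([seq (Ge, i) | i <- es] ++ w)).1 = (evalw w).1.
Proof.
elim: es => [|i es IH] //=; rewrite -IH.
have [hX _] := evalw_spart ([seq (Ge, i) | i <- es] ++ w).
by apply: (eq_spart (pmul_spart _ _) hX) => x y; apply: pmul_idp.
Qed.

End Words.

Lemma ord_incr_id n (f : 'I_n -> 'I_n) :
  (forall i : 'I_n, i.+1 < n -> f i < f (succI i)) -> f =1 id.
Proof.
case: n f => [|m] f incr; first by case.
have shift d j : j + d < m.+1 -> f (inord j) + d <= f (inord (j + d)).
  elim: d => [|d IH] lt_jd; first by rewrite !addn0.
  have := incr (inord (j + d)); rewrite inordK; last lia.
  have -> : succI (inord (j + d) : 'I_m.+1) = inord (j + d.+1).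
    by apply: ord_inj; rewrite succI_val !inordK //; lia.
  by have := IH ltac:(lia); lia.
move=> j; apply: ord_inj; have lt_j := ltn_ord j.
have := shift j 0; rewrite !add0n inord_val => /(_ lt_j) lo.
have := shift (m - j) j; rewrite subnKC ?inord_val => [/(_ (leqnn _)) hi|]; last by rewrite -ltnS.
by have := ltn_ord (f (inord m)); lia.
Qed.

Section Boxed.
Variables (n : nat) (J : spart n).
Hypothesis hJ : boxed J.
Implicit Types (x y z u v : 'I_(n + n)) (i j k a b : 'I_n).
Implicit Types (p q r : 'I_(n + n) -> 'I_(n + n)).

Lemma boxed_spart : is_spart J.
Proof. by case: hJ. Qed.

Lemma boxed_vertical j : sameb J (top j) (bot j).
Proof.
case: hJ => hs [hp _]; have [_ tJ _] := and3P hs.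
have tj : top j \in cover J by rewrite (cover_partition hs) inE.
have [S [SI BE]] := hp _ (pblock_mem tj).
have : top j \in pblock J (top j) by rewrite mem_pblock.
rewrite BE => /bigcupP[C CS tC]; have /imsetP[k _ eC] := subsetP SI _ CS.
move: tC; rewrite eC !inE eq_top eq_top_bot orbF => /eqP jk; subst k.
apply: (sameb_mem (pblock_mem tj)); first by rewrite mem_pblock.
by rewrite BE; apply/bigcupP; exists C => //; rewrite eC !inE eqxx orbT.
Qed.

Lemma boxed_trans y x z : sameb J x y -> sameb J y z -> sameb J x z.
Proof. exact: sameb_trans boxed_spart. Qed.

Lemma sameb_top_col x : sameb J x (top (col x)).
Proof.
case: (pointP x) => k ->; rewrite ?col_top ?col_bot; first exact: sameb_refl boxed_spart.
by rewrite sameb_sym boxed_vertical.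
Qed.

Lemma boxed_interval a k b : a <= k <= b -> sameb J (top a) (top b) -> sameb J (top a) (top k).
Proof.
move=> /andP[ak kb] /samebP[B BJ /andP[aB bB]]; case: hJ => _ [_ hB].
exact: (sameb_mem BJ aB (hB B BJ a k b ak kb aB bB)).
Qed.

Definition linked i := (i.+1 < n) && sameb J (top i) (top (succI i)).

Lemma boxed_linked a b i : sameb J (top a) (top b) -> a <= i < b -> linked i.
Proof.
move=> ab /andP[ai ib]; have lt_i : i.+1 < n by apply: leq_ltn_trans ib _.
rewrite /linked lt_i; apply: (@boxed_trans (top a)).
  by rewrite sameb_sym (boxed_interval _ ab) // ai ltnW.
by rewrite (boxed_interval _ ab) // succI_val // ib andbT; apply: leqW.
Qed.

Definition admissible p :=
  [/\ involutive p, forall x, p x != x & forall x, sameb J x (p x)].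

Lemma admissible_conjf p r : admissible p -> involutive r -> (forall z, sameb J z (r z)) ->
  admissible (conjf r p).
Proof.
case=> pK pF pJ rK rJ; split=> [x|x|x]; rewrite /conjf /=.
- by rewrite rK pK rK.
- by apply: contra (pF (r x)) => /eqP {2}<-; rewrite rK.
exact: boxed_trans (rJ x) (boxed_trans (pJ _) (rJ _)).
Qed.

Lemma sameb_tperm u v z : sameb J u v -> sameb J z (tperm u v z).
Proof.
move=> uv; case: tpermP => [->|->|_ _] //; first by rewrite sameb_sym.
exact: sameb_refl boxed_spart.
Qed.

Lemma admissible_conjf_tperm p u v :
  admissible p -> sameb J u v -> admissible (conjf (tperm u v) p).
Proof.
by move=> ap uv; apply: admissible_conjf ap (@tpermK _ _ _) _ => z; exact: sameb_tperm.
Qed.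

Definition generated p := exists w : seq (gkind * 'I_n),
  all (fun g : gkind * 'I_n => linked g.2) w /\ pairing (evalw w).1 p.

Lemma generated_s_gen p i : linked i ->
  generated (conjf (tperm (top i) (top (succI i))) p) -> generated p.
Proof.
move=> li [w [lw hw]]; exists ((Gz, i) :: w); split; first by rewrite /= li.
apply: pairing_ext (pairing_s_gen i (proj1 (evalw_spart w)) hw) _.
by move=> x; rewrite /conjf /= !tpermK.
Qed.

Definition perm_of p j : 'I_n := col (p (top j)).
Definition weight p := \sum_(j < n) j * perm_of p j.

Lemma capfree_top p j : ncaps p = 0 -> p (top j) = bot (perm_of p j).
Proof.
move/cards0_eq/setP/(_ (top j)); rewrite !inE is_top_top /= /perm_of.
by case: (pointP (p (top j))) => // k ->; rewrite col_bot.
Qed.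

Lemma pairing_idp p : admissible p -> ncaps p = 0 -> perm_of p =1 id -> pairing (idp n) p.
Proof.
case=> pK _ _ c0 pid; have pt j : p (top j) = bot j by rewrite capfree_top // pid.
have pb j : p (bot j) = top j by rewrite -(pt j) pK.
move=> x y; rewrite idp_sameb; case: (pointP x) => a ->; case: (pointP y) => b ->;
  by rewrite ?pt ?pb ?col_top ?col_bot ?eq_top ?eq_bot ?eq_top_bot ?eq_bot_top //= ?orbF // eq_sym.
Qed.

Lemma capfree_ascending p : admissible p -> ncaps p = 0 ->
  (forall i, i.+1 < n -> perm_of p i <= perm_of p (succI i)) -> perm_of p =1 id.
Proof.
case=> pK _ _ c0 asc; apply: ord_incr_id => i lt_i; rewrite ltn_neqAle asc // andbT.
apply/eqP => /val_inj e; have := succI_neq lt_i.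
have : p (top (succI i)) = p (top i) by rewrite !capfree_top // e.
by move/(can_inj pK)/top_inj->; rewrite eqxx.
Qed.

Lemma capfree_descent_linked p i : admissible p -> ncaps p = 0 -> i.+1 < n ->
  perm_of p (succI i) < perm_of p i -> linked i.
Proof.
case=> _ _ pJ c0 lt_i desc.
have colJ j : sameb J (top j) (top (perm_of p j)).
  by apply: (boxed_trans (pJ (top j))); rewrite capfree_top // sameb_sym; exact: boxed_vertical.
have [lt_ip|le_pi] := ltnP i (perm_of p i).
  by apply: (boxed_linked (colJ i)); rewrite leqnn.
apply: (@boxed_linked (perm_of p (succI i)) (succI i)); first by rewrite sameb_sym.
by rewrite succI_val // ltnSn andbT (leq_trans (ltnW desc) le_pi).
Qed.

Lemma perm_of_conjf p i j : ncaps p = 0 ->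
  perm_of (conjf (tperm (top i) (top (succI i))) p) j = perm_of p (tperm i (succI i) j).
Proof. by move=> c0; rewrite /perm_of /conjf /= tperm_top capfree_top // tperm_top_bot col_bot. Qed.

Lemma weight_bound p : weight p <= n * (n * n).
Proof.
apply: (@leq_trans (\sum_(j < n) n * n)); last by rewrite sum_nat_const card_ord.
by apply: leq_sum => j _; apply: leq_mul; apply: ltnW.
Qed.

Lemma weight_conjf p i : ncaps p = 0 -> i.+1 < n -> perm_of p (succI i) < perm_of p i ->
  weight p < weight (conjf (tperm (top i) (top (succI i))) p).
Proof.
move=> c0 lt_i desc.
have split2 (F : 'I_n -> nat) :
    \sum_j F j = F i + F (succI i) + \sum_(j | (j != i) && (j != succI i)) F j.
  by rewrite (bigD1 i) // (bigD1 (succI i)) /= ?succI_neq // addnA.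
rewrite /weight split2 [X in _ < X]split2 (perm_of_conjf i i c0) (perm_of_conjf i (succI i) c0).
rewrite tpermL tpermR [in X in _ < X](eq_bigr (fun j => j * perm_of p j)) => [|j /andP[ji ji']].
  by rewrite ltn_add2r; move: desc; rewrite succI_val //; nia.
by rewrite (perm_of_conjf i j c0) tpermD // eq_sym.
Qed.

Lemma generated_capfree p : admissible p -> ncaps p = 0 -> generated p.
Proof.
have [m] := ubnP (n * (n * n) - weight p); elim: m p => // m IH p lt_m ap c0.
case: (pickP (fun i : 'I_n => (i.+1 < n) && (perm_of p (succI i) < perm_of p i))).
  move=> i /andP[lt_i desc]; have li := capfree_descent_linked ap c0 lt_i desc.
  apply: (generated_s_gen li); apply: IH.
  - have := weight_conjf c0 lt_i desc.
    by have := weight_bound (conjf (tperm (top i) (top (succI i))) p); lia.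
  - by apply: (admissible_conjf_tperm ap); case/andP: li.
  by rewrite ncaps_conjf_top.
move=> asc; exists [::]; split=> //; apply: pairing_idp => //.
apply: capfree_ascending => // i lt_i.
by rewrite leqNgt; have := asc i; rewrite /= lt_i => /negbT.
Qed.

Lemma exists_cup p i : admissible p -> is_top (p (top i)) ->
  exists a b, sameb J (top i) (bot a) /\ p (bot a) = bot b.
Proof.
case=> pK _ pJ capi; pose blk := [set k | sameb J (top i) (top k)].
case: (pickP [pred a | (a \in blk) && ~~ is_top (p (bot a))]) => [a /andP[]|allTop].
  rewrite /blk inE => ia; case: (pointP (p (bot a))) => // b pa _.
  by exists a, b; split=> //; exact: (boxed_trans ia (boxed_vertical a)).
(* Otherwise p maps the bottom points of the block injectively into, hence onto, its top
   points, and top i would be paired with a bottom point. *)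
have pbE a : a \in blk -> p (bot a) = top (col (p (bot a))).
  move=> ab; have := allTop a; rewrite /= ab /=.
  by case: (pointP (p (bot a))) => // k ->; rewrite col_top.
pose f a := col (p (bot a)).
have sub : f @: blk \subset blk.
  apply/subsetP => _ /imsetP[a ab ->]; move: (ab); rewrite /blk !inE => ia.
  apply: (boxed_trans ia); apply: (boxed_trans (boxed_vertical a)).
  by rewrite /f -pbE //; exact: pJ.
have inj : {in blk &, injective f}.
  move=> a a' ab a'b e; apply: bot_inj; apply: (can_inj pK).
  by rewrite pbE // [RHS]pbE // -/(f a) -/(f a') e.
have eqB : f @: blk =i blk by apply/subset_cardP => //; rewrite card_in_imset.
have : i \in f @: blk by rewrite eqB /blk inE; exact: sameb_refl boxed_spart.
case/imsetP => a ab ia; move: capi.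
have <- : p (bot a) = top i by rewrite pbE // -/(f a) -ia.
by rewrite pK is_top_bot.
Qed.

Section Uncap.
Variables (p : 'I_(n + n) -> 'I_(n + n)) (i a b : 'I_n).
Hypotheses (ap : admissible p) (lt_i : i.+1 < n).
Hypotheses (cap : p (top i) = top (succI i)) (cup : p (bot a) = bot b).

Local Notation q := (conjf (tperm (top (succI i)) (bot a)) p).

Lemma uncap_top : q (top i) = bot a.
Proof.
have i'i : top (succI i) != top i by rewrite eq_top succI_neq.
by rewrite /conjf /= [tperm _ _ (top i)]tpermD ?eq_bot_top // cap tpermL.
Qed.

Lemma uncap_top_succ : q (top (succI i)) = bot b.
Proof.
case: ap => _ pF _; rewrite /conjf /= tpermL cup tpermD ?eq_top_bot //.
by rewrite eq_sym -cup pF.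
Qed.

Lemma uncap_other x : x != top i -> x != top (succI i) -> x != bot a -> x != bot b -> q x = p x.
Proof.
case: ap => pK _ _ xi xi' xa xb.
have pxi' : top (succI i) != p x.
  by apply: contraNneq xi => e; rewrite -(pK x) -e -cap pK.
have pxa : bot a != p x by apply: contraNneq xb => e; rewrite -(pK x) -e cup.
by rewrite /conjf /= [tperm _ _ x]tpermD 1?eq_sym // tpermD.
Qed.

Lemma admissible_uncap : sameb J (top i) (bot a) -> admissible q.
Proof.
move=> ia; case: (ap) => _ _ pJ.
apply: (admissible_conjf_tperm ap).
by apply: (boxed_trans _ ia); rewrite -cap sameb_sym.
Qed.

Lemma ncaps_uncap : ncaps q < ncaps p.
Proof.
apply: proper_card; apply/properP; split.
  apply/subsetP => x; rewrite !inE => /andP[tx tqx]; rewrite tx /=.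
  have [xi|xi] := eqVneq x (top i); first by move: tqx; rewrite xi uncap_top is_top_bot.
  have [xi'|xi'] := eqVneq x (top (succI i)).
    by move: tqx; rewrite xi' uncap_top_succ is_top_bot.
  have xbot c : x != bot c by apply/eqP => e; move: tx; rewrite e is_top_bot.
  by rewrite -uncap_other.
by exists (top i); rewrite !inE is_top_top ?cap ?is_top_top // uncap_top is_top_bot.
Qed.

Lemma generated_uncap : sameb J (top i) (bot a) -> generated q -> generated p.
Proof.
move=> ia [w [lw hw]]; case: (ap) => pK _ pJ.
have li : linked i by rewrite /linked lt_i -cap pJ.
exists ((Gd, i) :: w); split; first by rewrite /= li.
have qK : involutive q by move=> x; rewrite /conjf /= tpermK pK tpermK.
have := pairing_t_gen lt_i (proj1 (evalw_spart w)) qK hw.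
rewrite uncap_top uncap_top_succ !is_top_bot => /(_ isT isT) /pairing_ext; apply => x.
rewrite /cap_swap uncap_top uncap_top_succ.
have [->|xi] := eqVneq x (top i); first by rewrite cap.
have [->|xi'] := eqVneq x (top (succI i)); first by rewrite -cap pK.
have [->|xa] := eqVneq x (bot a); first by rewrite cup.
have [->|xb] := eqVneq x (bot b); first by rewrite -cup pK.
exact: uncap_other.
Qed.

End Uncap.

Lemma generated_cap p a b :
  (forall q, admissible q -> ncaps q < ncaps p -> generated q) ->
  admissible p -> a < b -> p (top a) = top b -> generated p.
Proof.
have [m] := ubnP (b - a); elim: m p a b => // m IHm p a b lt_m IH ap lt_ab pab.
have lt_b1 : b.-1 < n := leq_ltn_trans (leq_pred b) (ltn_ord b).
pose i := Ordinal lt_b1.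
have lt_i : i.+1 < n by rewrite /= prednK ?ltn_ord //; apply: leq_ltn_trans lt_ab.
have ib : succI i = b.
  by apply: ord_inj; rewrite succI_val //= prednK //; apply: leq_ltn_trans lt_ab.
case: (ap) => _ _ pJ.
have [ai|ai] := eqVneq a i.
  have cap : p (top i) = top (succI i) by rewrite ib -ai.
  have [a' [b' [ia' cup]]] : exists a' b', sameb J (top i) (bot a') /\ p (bot a') = bot b'.
    by apply: exists_cup ap _; rewrite cap is_top_top.
  apply: (generated_uncap ap lt_i cap cup ia'); apply: IH.
    exact: admissible_uncap ap cap ia'.
  exact: ncaps_uncap ap lt_i cap cup.
have b0 : 0 < b by apply: leq_ltn_trans lt_ab.
have le_ai : a <= i by rewrite /= -ltnS prednK.
have ab : sameb J (top a) (top b) by rewrite -pab pJ.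
have li : linked i by apply: (boxed_linked ab); rewrite le_ai /= ltn_predL.
apply: (generated_s_gen li); rewrite ib; apply: (IHm _ a i).
- by move: lt_m; rewrite /=; lia.
- by move=> q aq; rewrite ncaps_conjf_top => /(IH _ aq).
- by apply: (admissible_conjf_tperm ap); rewrite -ib; case/andP: li.
- by rewrite ltn_neqAle ai le_ai.
have ba : b != a by apply: contraTneq lt_ab => ->; rewrite ltnn.
have ia : i != a by rewrite eq_sym.
by rewrite /conjf /= tperm_top [tperm i b a]tpermD // pab tpermR.
Qed.

Lemma exists_cap p : admissible p -> 0 < ncaps p -> exists a b, a < b /\ p (top a) = top b.
Proof.
case=> pK pF _; rewrite card_gt0 => /set0Pn[x]; rewrite inE.
case: (pointP x) => // a -> /=; case: (pointP (p (top a))) => // b pab _.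
have [lt_ab|lt_ba|/val_inj eq_ab] := ltngtP a b; first by exists a, b.
  by exists b, a; rewrite -pab pK.
by move: (pF (top a)); rewrite pab eq_ab eqxx.
Qed.

Lemma generated_admissible p : admissible p -> generated p.
Proof.
have [m] := ubnP (ncaps p); elim: m p => // m IH p lt_m ap.
have [c0|/(exists_cap ap)[a [b [lt_ab pab]]]] := posnP (ncaps p).
  exact: generated_capfree.
by apply: (generated_cap _ ap lt_ab pab) => q aq lt_q; apply: IH aq; apply: leq_trans lt_q lt_m.
Qed.

Lemma boxed_sameb x y :
  sameb J x y = bridged [seq nat_of_ord i | i <- enum linked] (col x) (col y).
Proof.
set L := [seq _ | i <- _].
have memL (c : 'I_n) : (nat_of_ord c \in L) = linked c.
  by rewrite mem_map ?mem_enum //; exact: ord_inj.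
have topE a b : sameb J (top a) (top b) = bridged L a b.
  wlog le_ab : a b / a <= b.
    move=> wlog; have [|/ltnW] := leqP a b; first exact: wlog.
    by rewrite sameb_sym bridged_sym; apply: wlog.
  apply/idP/idP => [ab|/bridgedP]; rewrite ?(minn_idPl le_ab) ?(maxn_idPr le_ab).
    apply/bridgedP => k; rewrite (minn_idPl le_ab) (maxn_idPr le_ab) => /andP[ak kb].
    have kn : k < n := ltn_trans kb (ltn_ord b).
    by rewrite -[k]/(nat_of_ord (Ordinal kn)) memL; apply: (boxed_linked ab); rewrite ak.
  move=> brL; have reach d :
      a + d <= b -> exists2 c : 'I_n, c = a + d :> nat & sameb J (top a) (top c).
    elim: d => [|d IH] le; first by exists a; rewrite ?addn0 // sameb_refl ?boxed_spart.
    rewrite addnS in le; have [c cE ac] := IH (ltnW le).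
    have /andP[lt_c cc'] : linked c by rewrite -memL brL // cE leq_addr.
    by exists (succI c); [rewrite succI_val // cE addnS | exact: (boxed_trans ac cc')].
  have [|c cE ac] := reach (b - a); first by rewrite subnKC.
  by have -> : b = c by apply: ord_inj; rewrite cE subnKC.
have tx := sameb_top_col x; have ty := sameb_top_col y.
rewrite -topE; apply/idP/idP => h.
  by rewrite sameb_sym in tx; exact: (boxed_trans tx (boxed_trans h ty)).
by rewrite sameb_sym in ty; exact: (boxed_trans tx (boxed_trans h ty)).
Qed.

Lemma all_linked_e_prefix (w : seq (gkind * 'I_n)) :
  all (fun g : gkind * 'I_n => linked g.2) w ->
  all (fun g : gkind * 'I_n => linked g.2) ([seq (Ge, i) | i <- enum linked] ++ w).
Proof. by move=> lw; rewrite all_cat lw andbT all_map; apply/allP => i; rewrite mem_enum. Qed.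

Lemma evalw_e_snd (w : seq (gkind * 'I_n)) :
  all (fun g : gkind * 'I_n => linked g.2) w ->
  (evalw ([seq (Ge, i) | i <- enum linked] ++ w)).2 = J.
Proof.
move=> lw; set es := [seq _ | i <- _].
have lt_w : all (fun g : gkind * 'I_n => g.2.+1 < n) (es ++ w).
  by apply: (sub_all _ (all_linked_e_prefix lw)) => g /andP[].
apply: eq_spart (proj2 (evalw_spart _)) boxed_spart _ => x y.
rewrite evalw_snd_sameb // boxed_sameb; apply: eq_bridged => k.
have esE : [seq nat_of_ord g.2 | g <- es] = [seq nat_of_ord i | i <- enum linked].
  by rewrite -map_comp.
have wE : [seq nat_of_ord g.2 | g <- w] = [seq nat_of_ord i | i <- map snd w].
  by rewrite -map_comp.
have lw' : all linked (map snd w) by rewrite all_map.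
rewrite map_cat mem_cat esE wE; apply: orb_idr => /mapP[i iw ->].
by rewrite mem_map ?mem_enum; [exact: (allP lw') | exact: ord_inj].
Qed.

End Boxed.

Theorem proposition6p10 (n : nat) (I J : spart n) :
  inBR I J ->
  exists w : seq (gkind * 'I_n),
    all (fun g : gkind * 'I_n => (nat_of_ord g.2).+1 < n) w /\ evalw w = (I, J).
Proof.
case=> bI [hJ IJ]; have [p [pK pF hp]] := brauer_pairing bI.
have ap : admissible J p.
  by split=> // x; apply: (pleq_sameb (proj1 bI) (boxed_spart hJ) IJ); rewrite hp eqxx orbT.
have [w [lw hw]] := generated_admissible hJ ap.
exists ([seq (Ge, i) | i <- enum (linked J)] ++ w); split.
  by apply: (sub_all _ (all_linked_e_prefix lw)) => g /andP[].
rewrite [evalw _]surjective_pairing evalw_e_fst evalw_e_snd //; congr pair.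
exact: eq_pairing (proj1 (evalw_spart w)) (proj1 bI) hw hp.
Qed.
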